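(* Let $T$ be a locally finite, infinite tree with root $o$ in which every vertex has forward degree at least $2$, let $\phi$ be an ultrametric element on $T$, let $\mu$ be a Borel probability measure on $\partial T$ with $\operatorname{supp}(\mu) = \partial T$, and let $\sigma$ be a probability measure on $[0,\infty)$ whose distribution function $F_\sigma(r) = \sigma([0,r))$ satisfies $F_\sigma(0+) = 0$, $F_\sigma(\phi(o)) < 1$, and $F_\sigma$ is strictly increasing on each set $\Lambda_\phi(\xi) = \{\phi(x) : x \in \pi(o,\xi)\}$, $\xi \in \partial T$. Then there is an ultrametric element $\phi_*$ on $T$ such that the $(\phi,\mu,\sigma)$-process coincides with the standard process associated with $\mu$ and $\phi_*$, i.e. for every $t>0$ the operators $P^t$ defined from $(\phi,\mu,\sigma)$ and from $(\phi_*,\mu,\sigma_* )$ coincide.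
   Context: $T$ is identified with its vertex set; for $x\neq o$, $x^-$ is the neighbour of $x$ on the geodesic from $o$ to $x$, and the forward degree of $x$ is $|\{y : y^-=x\}|$. $\partial T$ is the set of ends (equivalence classes of geodesic rays, two rays being equivalent if their symmetric difference is finite); $\pi(o,\xi)$ is the ray from $o$ representing $\xi$. For distinct $\xi,\eta\in\partial T$, $\xi\wedge\eta$ is the last common vertex of $\pi(o,\xi)$ and $\pi(o,\eta)$. An ultrametric element is $\phi : T \to (0,\infty)$ with $\phi(x^-) > \phi(x)$ for all $x \neq o$ and $\phi(x_n)\to 0$ along every geodesic ray $[x_0,x_1,\dots]$; it induces the ultrametric $d_\phi(\xi,\eta) = \phi(\xi\wedge\eta)$ ($\xi\neq\eta$), $d_\phi(\xi,\xi)=0$, on $\partial T$, with closed balls $B_\phi(\xi,r) = \{\eta : d_\phi(\xi,\eta)\le r\}$. Given $(\phi,\mu,\sigma)$ as in the claim, for $r>0$ and $f\in L^2(\partial T,\mu)$ put $P_r f(\xi) = \mu(B_\phi(\xi,r))^{-1}\int_{B_\phi(\xi,r)} f\,d\mu$, and for $t>0$ let $\sigma^t$ be the probability measure on $[0,\infty)$ with distribution function $F_{\sigma^t}(r) = F_\sigma(r)^t$; then $P^t f(\xi) = \int_{[0,\infty)} P_r f(\xi)\,d\sigma^t(r)$. This is a Feller Markov semigroup; the associated Hunt process on $\partial T$ is called the $(\phi,\mu,\sigma)$-process. The standard process associated with $\mu$ and an ultrametric element $\phi$ is the $(\phi,\mu,\sigma_* )$-process, where $\sigma_*$ is the inverse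 exponential distribution, $\sigma_*([0,r)) = e^{-1/r}$ for $r>0$. *)

From HB Require Import structures.
From mathcomp Require Import all_boot all_order all_algebra.
From mathcomp Require Import all_classical all_reals all_analysis.
Set Implicit Arguments. Unset Strict Implicit. Unset Printing Implicit Defensive.
Import Order.TTheory GRing.Theory Num.Theory.
Import numFieldNormedType.Exports.
Local Open Scope classical_set_scope.
Local Open Scope ring_scope.

(* Rooted trees.  A rooted tree with root [o] is given by its vertex  *)
(* type [V] and the predecessor map [par] : x |-> x^- (the value      *)
(* [par o] is irrelevant).  The edges are {y, par y} for y <> o.      *)
Section Tree.
Variables (V : Type) (o : V) (par : V -> V).

Definition child (x y : V) : Prop := y <> o /\ par y = x.

Definition adj (x y : V) : Prop := child x y \/ child y x.

(* every vertex is joined to the root by iterating x |-> x^-;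
   with the edge set above this makes T a tree rooted at o *)
Definition rooted_tree : Prop := forall x : V, exists n, iter n par x = o.

(* locally finite: each vertex has finitely many neighbours
   (its parent and its finitely many forward neighbours) *)
Definition locally_finite : Prop := forall x : V, finite_set [set y | child x y].

Definition fdeg_ge2 (x : V) : Prop :=
  exists y1 y2, [/\ y1 <> y2, child x y1 & child x y2].

Definition geodesic_ray (f : nat -> V) : Prop :=
  (forall n, adj (f n) (f n.+1)) /\ (forall n, f n.+2 <> f n).

Definition oray (f : nat -> V) : Prop :=
  f 0%N = o /\ forall n, child (f n) (f n.+1).

Definition ultrametric_element {R : realType} (phi : V -> R) : Prop :=
  [/\ forall x, 0 < phi x,
      forall x, x <> o -> phi x < phi (par x)
    & forall f, geodesic_ray f -> (phi \o f) @ \oo --> 0].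

(* The boundary dT: ends are identified with their unique representing
   ray pi(o, xi) from the root.  The hypothesis [Hd] is only used to
   exhibit a point (dT is nonempty), needed by the measure library. *)
Definition bdry (Hd : forall x, fdeg_ge2 x) : Type := {f : nat -> V | oray f}.

Section Point.
Variable Hd : forall x, fdeg_ge2 x.

Let ex_child (x : V) : exists y, child x y.
Proof. by case: (Hd x) => y1 [y2 [_ H _]]; exists y1. Qed.

Let next (x : V) : V := proj1_sig (cid (ex_child x)).

Let next_child x : child x (next x).
Proof. exact: (proj2_sig (cid (ex_child x))). Qed.

Let ray0_fun (n : nat) : V := iter n next o.

Let ray0_oray : oray ray0_fun.
Proof. by split=> // n; rewrite /ray0_fun iterS; exact: next_child. Qed.

Definition ray0 : bdry Hd := exist _ ray0_fun ray0_oray.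

HB.instance Definition _ := gen_eqMixin (bdry Hd).
HB.instance Definition _ := gen_choiceMixin (bdry Hd).
HB.instance Definition _ := isPointed.Build (bdry Hd) ray0.

Definition cyl (x : V) : set (bdry Hd) := [set xi | exists n, sval xi n = x].

(* dT as a measurable space: the sigma-algebra generated by the cylinders,
   which is the Borel sigma-algebra of dT *)
Definition bdryM := g_sigma_algebraType (range cyl).

(* xi /\ eta : last common vertex of pi(o,xi) and pi(o,eta) (xi <> eta) *)
Definition meet_index (xi eta : bdry Hd) : nat :=
  xget 0%N [set n | sval xi n = sval eta n /\
                    forall m, (n < m)%N -> sval xi m <> sval eta m].
Definition meet (xi eta : bdry Hd) : V := sval xi (meet_index xi eta).

Variable R : realType.

Definition dphi (phi : V -> R) (xi eta : bdry Hd) : R :=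
  if pselect (xi = eta) then 0 else phi (meet xi eta).

Definition Bphi (phi : V -> R) (xi : bdry Hd) (r : R) : set bdryM :=
  [set eta | dphi phi xi eta <= r].

Definition Lambda (phi : V -> R) (xi : bdry Hd) : set R :=
  range (phi \o sval xi).

(* supp(mu) = dT : every (open) ball around every point has positive mass *)
Definition full_support (phi : V -> R) (mu : probability bdryM R) : Prop :=
  forall (xi : bdry Hd) (r : R), 0 < r -> (0 < mu (Bphi phi xi r))%E.

Definition L2 (mu : probability bdryM R) (f : bdryM -> R) : Prop :=
  measurable_fun setT f /\ mu.-integrable setT (fun y => ((f y) ^+ 2)%:E).

Definition Pr (phi : V -> R) (mu : probability bdryM R) (r : R)
    (f : bdryM -> R) (xi : bdry Hd) : R :=
  (fine (mu (Bphi phi xi r)))^-1 *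
    fine (\int[mu]_(y in Bphi phi xi r) (f y)%:E).

(* P^t f (xi) = int_[0,oo) P_r f(xi) d sigma^t(r), where [nu] plays the role
   of sigma^t *)
Definition Pt (phi : V -> R) (mu : probability bdryM R) (nu : probability R R)
    (f : bdryM -> R) (xi : bdry Hd) : \bar R :=
  (\int[nu]_(r in `[0%R, +oo[%classic) (Pr phi mu r f xi)%:E)%E.

End Point.
End Tree.

Definition distF {R : realType} (s : probability R R) (r : R) : R :=
  fine (s `[0%R, r[%classic).

(* [nu] is the probability measure on [0,oo) with distribution function
   r |-> F(r)^t  (r > 0); for r <= 0 the value nu([0,r)) = 0 is automatic *)
Definition pow_dist {R : realType} (nu : probability R R) (F : R -> R) (t : R) : Prop :=
  nu `[0%R, +oo[%classic = 1%E /\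
  forall r, 0 < r -> nu `[0%R, r[%classic = ((F r) `^ t)%:E.

(* distribution function of the inverse exponential distribution sigma_* *)
Definition F_invexp {R : realType} (r : R) : R := expR (- r^-1).

From HB Require Import structures.
From mathcomp Require Import all_boot all_order all_algebra.
From mathcomp Require Import all_classical all_reals all_analysis.
From mathcomp Require Import measurable_realfun.
Set Implicit Arguments. Unset Strict Implicit. Unset Printing Implicit Defensive.
Import Order.TTheory GRing.Theory Num.Theory.
Import numFieldNormedType.Exports.
Local Open Scope classical_set_scope.
Local Open Scope ring_scope.

(* Along the ray pi(o, xi) = [x_0, x_1, ...] the radii a_n = phi(x_n) decrease
   strictly to 0, so the ball B_phi(xi, r) only depends on the step set of
   [0, oo) -- {0}, [a_0, oo[ or [a_n, a_(n-1)[ -- containing r.  Hence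
   P^t f(xi) is a series whose n-th term is the value of P_r f(xi) on the
   n-th step set times its sigma^t-mass, and these masses are determined by
   the numbers F_sigma(a_n)^t.  With phi_*(x) = -1/log F_sigma(phi(x)) one has
   F_sigma_*(phi_*(x)) = F_sigma(phi(x)), so the series for phi_* and sigma_*
   has the same balls and the same weights, term by term. *)

Definition decreasing_to0 {R : realType} (a : nat -> R) : Prop :=
  [/\ forall n, 0 < a n, forall n, a n.+1 < a n & a @ \oo --> 0].

Section StepSets.
Variables (R : realType) (a : nat -> R).

Definition step_set (n : nat) : set R :=
  match n with
  | 0 => [set 0]
  | 1 => `[a 0%N, +oo[
  | k.+2 => `[a k.+1, a k[
  end.

Definition step_point (n : nat) : R := if n is k.+1 then a k else 0.

Hypothesis ha : decreasing_to0 a.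

Let a_gt0 n : 0 < a n. Proof. by case: ha. Qed.
Let a_decr n : a n.+1 < a n. Proof. by case: ha. Qed.

Lemma decreasing_to0_le j m : (a j <= a m) = (m <= j)%N.
Proof. exact: (Order.NatMonotonyTheory.decnP a_decr). Qed.

Lemma decreasing_to0_below r : 0 < r -> exists n, a n <= r.
Proof.
case: ha => _ _ /cvgrPdist_lt cvg0 r0; have [N _ hN] := cvg0 _ r0.
exists N; have := hN N (leqnn N).
by rewrite /= sub0r normrN ger0_norm ?(ltW (a_gt0 N)) // => /ltW.
Qed.

Lemma step_set_ge0 n r : step_set n r -> 0 <= r.
Proof.
case: n => [|[|k]] /=; rewrite ?in_itv /= ?andbT.
- by move=> ->.
- exact/le_trans/ltW.
- by case/andP=> + _; exact/le_trans/ltW.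
Qed.

Lemma step_set_point n : step_set n (step_point n).
Proof. by case: n => [|[|k]] //=; rewrite in_itv /= lexx //= a_decr. Qed.

Lemma step_set_cover r : 0 <= r -> exists n, step_set n r.
Proof.
rewrite le_eqVlt => /predU1P[<-|r0]; first by exists 0%N.
have [a0r|ra0] := leP (a 0%N) r; first by exists 1%N; rewrite /= in_itv /= a0r.
have [m am mmin] := ex_minnP (decreasing_to0_below r0).
case: m am mmin => [|k] am mmin; first by move: ra0; rewrite ltNge am.
exists k.+2; rewrite /= in_itv /= am ltNge /=.
by apply/negP => /mmin; rewrite ltnn.
Qed.

Lemma le_step_set n r j : step_set n r -> (a j <= r) = (0 < n <= j.+1)%N.
Proof.
case: n => [|[|k]] /=.
- by move=> ->; rewrite leNgt a_gt0.
- by rewrite in_itv /= andbT => /(le_trans _)->; rewrite ?decreasing_to0_le.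
- rewrite in_itv /= ltnS => /andP[akr rak].
  have [kj|jk] := leqP k.+1 j; first by rewrite (le_trans _ akr) ?decreasing_to0_le.
  by apply/negbTE; rewrite -ltNge (lt_le_trans rak) // decreasing_to0_le -ltnS.
Qed.

Lemma step_set_inj n m r : step_set n r -> step_set m r -> n = m.
Proof.
move=> /le_step_set hn /le_step_set hm.
have {hn hm} h j : (0 < n <= j.+1)%N = (0 < m <= j.+1)%N by rewrite -hn -hm.
case: n m h => [|n] [|m] h //; first by have := h m; rewrite ltnSn.
  by have := h n; rewrite ltnSn.
have := h m; have := h n; rewrite /= !leqnn => nm mn.
by apply/eqP; rewrite eqn_leq mn -nm.
Qed.

Lemma measurable_step_set n : measurable (step_set n).
Proof. by case: n => [|[|k]] /=; [exact: measurable_set1|exact: measurable_itv..]. Qed.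

Local Open Scope ereal_scope.

Lemma integral_step_sets (nu : {measure set R -> \bar R}) (G : R -> \bar R) :
  (forall r, 0 <= G r) -> (forall n r, step_set n r -> G r = G (step_point n)) ->
  \int[nu]_(r in `[0%R, +oo[%classic) G r =
    \sum_(n <oo) G (step_point n) * nu (step_set n).
Proof.
move=> G0 Gstep.
have ind_ge0 n r : 0 <= (\1_(step_set n) r : R)%:E by rewrite lee_fin.
transitivity (\int[nu]_(r in `[0%R, +oo[%classic)
    \sum_(n <oo) G (step_point n) * (\1_(step_set n) r : R)%:E).
  apply: eq_integral => r; rewrite inE /= in_itv /= andbT => r0.
  have [n0 Ar] := step_set_cover r0.
  rewrite (@nneseriesD1 _ _ n0 xpredT) //; last by move=> k _; exact: mule_ge0.
  rewrite indicE mem_set // mule1 -(Gstep _ _ Ar) eseries0 ?adde0 // => i _ /andP[_ i0].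
  by rewrite indicE memNset ?mule0 // => /step_set_inj/(_ Ar) ei; rewrite ei eqxx in i0.
rewrite integral_nneseries //; last 2 first.
- move=> n; apply: emeasurable_funM; first exact: measurable_cst.
  by apply/measurable_EFinP/measurable_indic; exact: measurable_step_set.
- by move=> n r _; exact: mule_ge0.
apply: eq_eseriesr => n _; rewrite ge0_integralZl //.
  rewrite (integral_indic _ (measurable_itv _) (measurable_step_set n)).
  by rewrite setIidl // => r /step_set_ge0; rewrite /= in_itv /= andbT.
by apply/measurable_EFinP/measurable_indic; exact: measurable_step_set.
Qed.

Lemma cvg_measure_itv0 (nu : probability R R) :
  (fun n => nu `[0%R, a n[%classic) @ \oo --> nu [set 0%R].
Proof.
have cap : \bigcap_n `[0%R, a n[%classic = [set 0%R].
  apply/seteqP; split => [x hx|_ -> n _]; last by rewrite /= in_itv /= lexx a_gt0.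
  have := hx 0%N I; rewrite /= in_itv /= => /andP[x_ge0 _].
  apply/eqP; rewrite eq_le x_ge0 andbT leNgt; apply/negP => /decreasing_to0_below[n anx].
  by have := hx n I; rewrite /= in_itv /= ltNge anx andbF.
rewrite -cap; apply: nonincreasing_cvg_mu => //.
- by rewrite (le_lt_trans (probability_le1 _ (measurable_itv _))) ?ltey.
- by rewrite cap; exact: measurable_set1.
move=> n m nm; rewrite subsetEset => x /=; rewrite !in_itv /= => /andP[-> xa].
by rewrite (lt_le_trans xa) // decreasing_to0_le.
Qed.

End StepSets.

Section ProbabilityIntervals.
Variable R : realType.
Local Open Scope ereal_scope.

Lemma probability_setD (nu : probability R R) (A B : set R) :
  measurable A -> measurable B -> A `<=` B -> nu (B `\` A) = nu B - nu A.
Proof.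
move=> mA mB AB; rewrite measureD ?(setIidr AB) //.
by rewrite (le_lt_trans (probability_le1 _ mB)) ?ltey.
Qed.

Lemma probability_itv_bnd (nu : probability R R) (c d : R) : (0 <= c <= d)%R ->
  nu `[c, d[%classic = nu `[0%R, d[%classic - nu `[0%R, c[%classic.
Proof.
case/andP=> c0 cd; rewrite -probability_setD; try exact: measurable_itv.
  congr (nu _); apply/seteqP; split => x /=; rewrite !in_itv /=.
    by case/andP=> cx ->; rewrite (le_trans c0 cx) ltNge cx.
  by case=> /andP[x0 ->] /negP; rewrite x0 /= -leNgt andbT.
by move=> x /=; rewrite !in_itv /= => /andP[-> /lt_le_trans->].
Qed.

Lemma probability_itv_infty (nu : probability R R) (c : R) : (0 <= c)%R ->
  nu `[c, +oo[%classic = nu `[0%R, +oo[%classic - nu `[0%R, c[%classic.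
Proof.
move=> c0; rewrite -probability_setD; try exact: measurable_itv.
  congr (nu _); apply/seteqP; split => x /=; rewrite !in_itv /= ?andbT.
    by move=> cx; rewrite (le_trans c0 cx) ltNge cx.
  by case=> x0 /negP; rewrite x0 /= -leNgt.
by move=> x /=; rewrite !in_itv /= andbT => /andP[].
Qed.

Lemma measure_step_set_eq (a b : nat -> R) (nu nus : probability R R)
    (F Fs : R -> R) (t : R) :
  decreasing_to0 a -> decreasing_to0 b ->
  pow_dist nu F t -> pow_dist nus Fs t -> (forall n, F (a n) = Fs (b n)) ->
  forall n, nu (step_set a n) = nus (step_set b n).
Proof.
move=> ha hb [nu1 nuF] [nus1 nusF] Fab.
have [a_gt0 a_decr _] := ha; have [b_gt0 b_decr _] := hb.
have itv0 n : nu `[0%R, a n[%classic = nus `[0%R, b n[%classic by rewrite nuF // nusF // Fab.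
case=> [|[|k]] /=.
- rewrite -(cvg_lim _ (cvg_measure_itv0 ha (nu := nu))) // (funext itv0).
  by rewrite (cvg_lim _ (cvg_measure_itv0 hb (nu := nus))).
- rewrite (probability_itv_infty _ (ltW (a_gt0 0%N))).
  by rewrite (probability_itv_infty _ (ltW (b_gt0 0%N))) nu1 nus1 itv0.
- have ak : (0 <= a k.+1 <= a k)%R by rewrite !ltW.
  have bk : (0 <= b k.+1 <= b k)%R by rewrite !ltW.
  by rewrite (probability_itv_bnd _ ak) (probability_itv_bnd _ bk) !itv0.
Qed.

Lemma ge0_integral_step_sets_eq (a b : nat -> R) (nu nus : {measure set R -> \bar R})
    (G Gs : R -> \bar R) :
  decreasing_to0 a -> decreasing_to0 b ->
  (forall r, 0 <= G r) -> (forall r, 0 <= Gs r) ->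
  (forall n r s, step_set a n r -> step_set b n s -> G r = Gs s) ->
  (forall n, nu (step_set a n) = nus (step_set b n)) ->
  \int[nu]_(r in `[0%R, +oo[%classic) G r = \int[nus]_(r in `[0%R, +oo[%classic) Gs r.
Proof.
move=> ha hb G0 Gs0 GGs nuab.
have Gpt n : G (step_point a n) = Gs (step_point b n).
  exact: GGs (step_set_point ha n) (step_set_point hb n).
rewrite (integral_step_sets ha) // => [|n r Ar]; last first.
  by rewrite (GGs _ _ _ Ar (step_set_point hb n)) Gpt.
rewrite (integral_step_sets hb) // => [|n r Br]; last first.
  by rewrite -(GGs _ _ _ (step_set_point ha n) Br) Gpt.
by apply: eq_eseriesr => n _; rewrite Gpt; congr (_ * _).
Qed.

Lemma integral_step_sets_eq (a b : nat -> R) (nu nus : {measure set R -> \bar R})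
    (g gs : R -> R) :
  decreasing_to0 a -> decreasing_to0 b ->
  (forall n r s, step_set a n r -> step_set b n s -> g r = gs s) ->
  (forall n, nu (step_set a n) = nus (step_set b n)) ->
  \int[nu]_(r in `[0%R, +oo[%classic) (g r)%:E =
    \int[nus]_(r in `[0%R, +oo[%classic) (gs r)%:E.
Proof.
move=> ha hb ggs nuab; rewrite integralE [RHS]integralE.
congr (_ - _); apply: (ge0_integral_step_sets_eq ha hb) => //.
- by move=> n r s Ar Bs; rewrite !funeposE /= (ggs _ _ _ Ar Bs).
- by move=> n r s Ar Bs; rewrite !funenegE /= (ggs _ _ _ Ar Bs).
Qed.

End ProbabilityIntervals.

Section InverseExponential.
Variable R : realType.
Implicit Types u v e : R.

Definition F_invexp_inv v : R := - (ln v)^-1.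

Lemma F_invexp_inv_gt0 v : 0 < v < 1 -> 0 < F_invexp_inv v.
Proof. by move=> /ln_lt0 v_lt; rewrite oppr_gt0 invr_lt0. Qed.

Lemma F_invexp_inv_lt u v : 0 < u -> u < v -> v < 1 -> F_invexp_inv u < F_invexp_inv v.
Proof.
move=> u0 uv v1; have v0 : 0 < v by exact: lt_trans uv.
have lnv : ln v < 0 by apply: ln_lt0; rewrite v0 v1.
have lnuv : ln u < ln v by rewrite ltr_ln ?posrE.
by rewrite ltrN2 ltf_nV2 ?negrE // (lt_trans lnuv lnv).
Qed.

Lemma F_invexp_invK v : 0 < v -> F_invexp (F_invexp_inv v) = v.
Proof. by move=> v0; rewrite /F_invexp /F_invexp_inv invrN invrK opprK lnK ?posrE. Qed.

(* Since ln 0 = 0 in the library, [F_invexp_inv 0 = 0] and no positivity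
   assumption on the sequence is needed. *)
Lemma cvg_F_invexp_inv0 (v : nat -> R) : (forall n, 0 <= v n) ->
  v @ \oo --> 0 -> (fun n => F_invexp_inv (v n)) @ \oo --> 0.
Proof.
move=> v0 /cvgrPdist_lt v_cvg; apply/cvgrPdist_lt => e e0.
apply: filterS (v_cvg _ (expR_gt0 (- e^-1))) => n.
rewrite !sub0r !normrN ger0_norm // /F_invexp_inv.
have := v0 n; rewrite le_eqVlt => /predU1P[<- _|vn0 vn_lt].
  by rewrite ln0 // invr0 normr0.
have lnv : ln (v n) < - e^-1 by rewrite -ltr_ln ?posrE ?expR_gt0 // expRK in vn_lt.
have lnv0 : ln (v n) < 0 by apply: lt_trans lnv _; rewrite oppr_lt0 invr_gt0.
by rewrite normfV ltr0_norm // invf_plt ?posrE ?oppr_gt0 // ltrNr.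
Qed.

End InverseExponential.

Section RaysFromTheRoot.
Variables (V : Type) (o : V) (par : V -> V).
Hypothesis Htree : rooted_tree o par.
Hypothesis Hd : forall x : V, fdeg_ge2 o par x.

Lemma ray_root (xi : bdry Hd) : sval xi 0%N = o.
Proof. exact: (proj2_sig xi).1. Qed.

Lemma ray_child (xi : bdry Hd) n : child o par (sval xi n) (sval xi n.+1).
Proof. exact: (proj2_sig xi).2. Qed.

(* A backtracking step f n.+2 = f n would make both f n.+1 and f n.+2 children
   of each other, so iterating [par] from f n would never reach o. *)
Lemma oray_geodesic f : oray o par f -> geodesic_ray o par f.
Proof.
case=> _ f_child; split=> [n|n back]; first by left; exact: f_child.
have [f1_ne_o par1] := f_child n; have [f2_ne_o par2] := f_child n.+1.
rewrite back in f2_ne_o par2.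
have [m root] := Htree (f n).
have : iter m par (f n) = f n \/ iter m par (f n) = f n.+1.
  elim: m {root} => [|m [IH|IH]] /=; [by left | right | left].
  - by rewrite IH par2.
  - by rewrite IH par1.
by rewrite root => -[] /esym; [exact: f2_ne_o | exact: f1_ne_o].
Qed.

Lemma exists_ray_through x : exists (xi : bdry Hd) n, sval xi n = x.
Proof.
have next x' : exists y, child o par x' y by case: (Hd x') => y [_ [_ ? _]]; exists y.
have [n] := Htree x; elim: n x => [|n IH] x root.
  by exists (ray0 Hd), 0%N; rewrite ray_root.
have [->|x_ne_o] := pselect (x = o); first by exists (ray0 Hd), 0%N; rewrite ray_root.
rewrite iterSr in root; have [xi [k xik]] := IH _ root.
pose nxt x' := proj1_sig (cid (next x')).
pose g m := if (m <= k)%N then sval xi m else iter (m - k.+1) nxt x.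
have og : oray o par g.
  split=> [|m]; first by rewrite /g leq0n ray_root.
  rewrite /g; case: (ltngtP m k) => mk.
  - exact: ray_child.
  - by rewrite subSn // iterS; exact: (proj2_sig (cid (next _))).
  - by rewrite mk subnn /= xik; split.
by exists (exist _ g og), k.+1; rewrite /= /g ltnn subnn.
Qed.

Lemma Bphi_eq (R : realType) (p q : V -> R) (xi : bdry Hd) (r s : R) :
  (0 <= r) = (0 <= s) -> (forall j, (p (sval xi j) <= r) = (q (sval xi j) <= s)) ->
  Bphi p xi r = Bphi q xi s.
Proof.
move=> sign thr; rewrite /Bphi; apply/funext => eta /=; rewrite /dphi.
by case: pselect => ?; rewrite ?sign // /meet thr.
Qed.

Lemma ultrametric_decreasing_to0 (R : realType) (phi : V -> R) :
  ultrametric_element o par phi -> forall xi : bdry Hd, decreasing_to0 (phi \o sval xi).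
Proof.
case=> phi_gt0 phi_decr phi_cvg0 xi; split=> [n|n|] /=; first exact: phi_gt0.
  by have [xi_ne_o <-] := ray_child xi n; exact: phi_decr.
exact/phi_cvg0/oray_geodesic/(proj2_sig xi).
Qed.

Lemma Pt_eq_of_ray (R : realType) (phi psi : V -> R) (mu : probability (bdryM Hd) R)
    (nu nus : probability R R) (F Fs : R -> R) (t : R) (f : bdryM Hd -> R)
    (xi : bdry Hd) :
  decreasing_to0 (phi \o sval xi) -> decreasing_to0 (psi \o sval xi) ->
  pow_dist nu F t -> pow_dist nus Fs t ->
  (forall n, F (phi (sval xi n)) = Fs (psi (sval xi n))) ->
  Pt phi mu nu f xi = Pt psi mu nus f xi.
Proof.
move=> ha hb hnu hnus Fab; rewrite /Pt.
apply: (integral_step_sets_eq ha hb); last exact: measure_step_set_eq hnu hnus Fab.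
move=> n r s Ar Bs; rewrite /Pr (@Bphi_eq _ phi psi xi r s) //.
  by rewrite (step_set_ge0 ha Ar) (step_set_ge0 hb Bs).
by move=> j; rewrite (le_step_set ha j Ar) (le_step_set hb j Bs).
Qed.

End RaysFromTheRoot.

Theorem lemma3p2 (R : realType) (V : Type) (o : V) (par : V -> V)
  (Htree : rooted_tree o par) (Hlf : locally_finite o par)
  (Hinf : infinite_set [set: V])
  (Hd : forall x : V, fdeg_ge2 o par x)
  (phi : V -> R) (Hphi : ultrametric_element o par phi)
  (mu : probability (bdryM Hd) R) (Hsupp : full_support phi mu)
  (sigma : probability R R) (Hsig : sigma `[0%R, +oo[%classic = 1%E)
  (HF0 : distF sigma r @[r --> 0^'+] --> 0)
  (HFo : distF sigma (phi o) < 1)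
  (HFinc : forall (xi : bdry Hd) (a b : R),
      Lambda phi xi a -> Lambda phi xi b -> a < b ->
      distF sigma a < distF sigma b) :
  exists phis : V -> R, ultrametric_element o par phis /\
    forall t : R, 0 < t ->
    forall nu nus : probability R R,
      pow_dist nu (distF sigma) t -> pow_dist nus F_invexp t ->
      forall f : bdryM Hd -> R, L2 mu f ->
        {ae mu, forall xi : bdry Hd, Pt phi mu nu f xi = Pt phis mu nus f xi}.
Proof.
set F := distF sigma.
have [phi_gt0 _ phi_cvg0] := Hphi.
have F_lt (xi : bdry Hd) m n : (m < n)%N -> F (phi (sval xi n)) < F (phi (sval xi m)).
  move=> mn; apply: HFinc; [by exists n | by exists m |].
  by rewrite ltNge (decreasing_to0_le (ultrametric_decreasing_to0 Htree Hphi xi)) -ltnNge.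
have F_phi x : 0 < F (phi x) < 1.
  have [xi [n <-]] := exists_ray_through Htree Hd x.
  have F_ge0 : 0 <= F (phi (sval xi n.+1)) by apply/fine_ge0/measure_ge0.
  rewrite (le_lt_trans F_ge0 (F_lt xi n n.+1 (ltnSn n))) /=.
  move: HFo; rewrite -{1}(ray_root xi); apply: le_lt_trans.
  by case: n {F_ge0} => [|n]; [exact: lexx | exact/ltW/F_lt].
pose phis x := F_invexp_inv (F (phi x)).
have phis_ult : ultrametric_element o par phis.
  split=> [x|x x_ne_o|g g_geo]; first exact: F_invexp_inv_gt0.
  - have [xi [[|n] xin]] := exists_ray_through Htree Hd x; subst x.
      by rewrite ray_root in x_ne_o.
    have [_ ->] := ray_child xi n; apply: F_invexp_inv_lt; last by case/andP: (F_phi (sval xi n)).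
      by case/andP: (F_phi (sval xi n.+1)).
    exact: F_lt.
  - apply: cvg_F_invexp_inv0 => [n|]; first exact/fine_ge0/measure_ge0.
    by move/cvg_at_rightP: HF0; apply; split=> [n|]; [exact: phi_gt0 | exact: phi_cvg0].
exists phis; split=> // t _ nu nus hnu hnus f _; apply: aeW => xi.
have ray_decr := @ultrametric_decreasing_to0 _ _ _ Htree Hd R.
apply: (Pt_eq_of_ray mu f (ray_decr _ Hphi xi) (ray_decr _ phis_ult xi) hnu hnus) => n.
by rewrite /phis F_invexp_invK //; case/andP: (F_phi (sval xi n)).
Qed.
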